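(* Let $R=\bigoplus_{\alpha\in\Gamma}R_{\alpha}$ be a graded integral domain and $\star$ a semistar operation on $R$. Then $N(\star):=\{f\in R[X]: f\neq0\text{ and }A_f^{\star}=R^{\star}\}$ is a saturated multiplicatively closed subset of $R[X]$.
   Context: $\Gamma$ is a commutative cancellative monoid (written additively) whose quotient group $\langle\Gamma\rangle$ is torsion-free. A graded integral domain $R=\bigoplus_{\alpha\in\Gamma}R_\alpha$ is an integral domain that is the direct sum of additive subgroups $R_\alpha$ with $R_\alpha R_\beta\subseteq R_{\alpha+\beta}$, with quotient field $K$. For $a\in R$, $C(a)$ is the ideal of $R$ generated by the homogeneous components of $a$; for $f=f_0+\cdots+f_nX^n\in R[X]$, $A_f:=\sum_i C(f_i)$. A semistar operation on $R$ is a map $\star$ from the set of nonzero $R$-submodules of $K$ to itself such that for all $0\ne x\in K$ and $E,F$: $(xE)^\star=xE^\star$; $E\subseteq F\Rightarrow E^\star\subseteq F^\star$; $E\subseteq E^\star$; $(E^\star)^\star=E^\star$. *)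

From mathcomp Require Import all_boot all_order all_algebra.
Set Implicit Arguments. Unset Strict Implicit. Unset Printing Implicit Defensive.
Import Order.TTheory GRing.Theory Num.Theory.
Local Open Scope ring_scope.

(* For a cancellative
   commutative monoid, torsion-freeness of the group of differences says
   exactly: n(a - b) = 0 with n > 0 implies a = b, i.e. n*a = n*b -> a = b. *)
Definition torsionfree_cancellative_monoid (G : nmodType) : Prop :=
  (forall a b c : G, a + c = b + c -> a = b) /\
  (forall (n : nat) (a b : G), (0 < n)%N -> a *+ n = b *+ n -> a = b).

(* A graded integral domain R = (+)_{alpha in G} R_alpha, presented inside its
   quotient field K.  R and the R_alpha are subsets of K. *)
Definition graded_domain (G : nmodType) (K : fieldType)
    (R : K -> Prop) (Rg : G -> K -> Prop) : Prop :=
  [/\ R 1, (forall x y, R x -> R y -> R (x - y)) & (forall x y, R x -> R y -> R (x * y))] /\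
  (forall a, Rg a 0) /\
  (forall a x y, Rg a x -> Rg a y -> Rg a (x - y)) /\
  (forall a x, Rg a x -> R x) /\
  (forall a b x y, Rg a x -> Rg b y -> Rg (a + b) (x * y)) /\
  (forall x, R x -> exists (s : seq G) (f : G -> K),
      [/\ uniq s, (forall a, a \in s -> Rg a (f a)) & x = \sum_(a <- s) f a]) /\
  (forall (s : seq G) (f : G -> K), uniq s -> (forall a, a \in s -> Rg a (f a)) ->
      \sum_(a <- s) f a = 0 -> forall a, a \in s -> f a = 0) /\
  (forall k : K, exists a b, [/\ R a, R b, b != 0 & k = a / b]).

Definition hcomp (G : nmodType) (K : fieldType) (Rg : G -> K -> Prop) (a y : K) : Prop :=
  exists (s : seq G) (f : G -> K),
    [/\ uniq s, (forall b, b \in s -> Rg b (f b)), a = \sum_(b <- s) f b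
      & exists2 b, b \in s & y = f b].

Definition ideal_gen (K : fieldType) (R : K -> Prop) (S : K -> Prop) : K -> Prop :=
  fun z => exists s : seq (K * K),
    [/\ (forall p, p \in s -> R p.1), (forall p, p \in s -> S p.2)
      & z = \sum_(p <- s) p.1 * p.2].

Definition Cont (G : nmodType) (K : fieldType) (R : K -> Prop) (Rg : G -> K -> Prop)
    (a : K) : K -> Prop := ideal_gen R (hcomp Rg a).

Definition Af (G : nmodType) (K : fieldType) (R : K -> Prop) (Rg : G -> K -> Prop)
    (f : {poly K}) : K -> Prop :=
  ideal_gen R (fun y => exists i : nat, hcomp Rg f`_i y).

Definition inRX (K : fieldType) (R : K -> Prop) (f : {poly K}) : Prop :=
  forall i : nat, R f`_i.

Definition nz_submod (K : fieldType) (R : K -> Prop) (E : K -> Prop) : Prop :=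
  [/\ E 0, (forall x y, E x -> E y -> E (x + y)),
      (forall r x, R r -> E x -> E (r * x)) & exists2 x, x != 0 & E x].

Definition scale_set (K : fieldType) (x : K) (E : K -> Prop) : K -> Prop :=
  fun z => exists2 e, E e & z = x * e.

(* semistar operation on R: a map from nonzero R-submodules of K to
   nonzero R-submodules of K (values outside are irrelevant) *)
Definition semistar (K : fieldType) (R : K -> Prop) (star : (K -> Prop) -> (K -> Prop)) : Prop :=
  [/\ (forall E, nz_submod R E -> nz_submod R (star E)),
      (forall (x : K) E, x != 0 -> nz_submod R E -> star (scale_set x E) = scale_set x (star E)),
      (forall E F, nz_submod R E -> nz_submod R F -> (forall z, E z -> F z) ->
          forall z, star E z -> star F z),
      (forall E, nz_submod R E -> forall z, E z -> star E z)
    & (forall E, nz_submod R E -> star (star E) = star E)].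

Definition Nstar (G : nmodType) (K : fieldType) (R : K -> Prop) (Rg : G -> K -> Prop)
    (star : (K -> Prop) -> (K -> Prop)) : {poly K} -> Prop :=
  fun f => [/\ inRX R f, f != 0 & star (Af R Rg f) = star R].

Definition saturated_mult_closed (K : fieldType) (R : K -> Prop) (N : {poly K} -> Prop) : Prop :=
  [/\ (forall f, N f -> inRX R f),
      N 1,
      (forall f g, N f -> N g -> N (f * g))
    & (forall f g, inRX R f -> inRX R g -> N (f * g) -> N f /\ N g)].

From mathcomp Require Import all_boot all_order all_algebra.
From mathcomp Require Import ring lra zify.
From Stdlib Require Import Classical ClassicalEpsilon FunctionalExtensionality PropExtensionality.
Set Implicit Arguments. Unset Strict Implicit. Unset Printing Implicit Defensive.
Import Order.TTheory GRing.Theory Num.Theory.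
Local Open Scope ring_scope.

(* Saturation is the easy half: a homogeneous component of a coefficient of
   f g is a sum of products of homogeneous components of coefficients of f
   and of g, so A_fg lies in A_f and in A_g, and A_f^* is squeezed between
   A_fg^* = R^* and R^*.

   For products, grade R[X] by nat * Gamma.  As Gamma is cancellative and
   torsion-free, the finitely many degrees occurring in f and g admit an
   additive rational weight that is injective on them; this turns f and g into
   sums with distinct rational exponents whose product has all its
   coefficients in A_fg.  A McCoy-type induction on the number of terms then
   gives A_f^N A_g^N <= A_fg for some N.  Finally, A_f^* = R^* means that
   z A_f <= E^* forces z in E^*; peeling off the N factors from A_f and then
   those from A_g shows 1 in A_fg^*, hence A_fg^* = R^*. *)

Section SeparatingWeights.
Variable M : nmodType.
Hypothesis addIm : forall a b c : M, a + c = b + c -> a = b.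
Hypothesis mulnIm : forall (n : nat) (a b : M), (0 < n)%N -> a *+ n = b *+ n -> a = b.
Variable s : nat -> M.

Definition combo r (n : nat -> nat) : M := \sum_(i < r) s i *+ n i.
Definition wcombo (w : nat -> rat) r (n : nat -> nat) : rat := \sum_(i < r) (n i)%:R * w i.

Lemma comboS r n : combo r.+1 n = combo r n + s r *+ n r.
Proof. by rewrite /combo big_ord_recr. Qed.

Lemma wcomboS w r n : wcombo w r.+1 n = wcombo w r n + (n r)%:R * w r.
Proof. by rewrite /wcombo big_ord_recr. Qed.

Lemma combo_lin r a b c (x y z : nat -> nat) :
  combo r (fun i => a * x i + b * y i + c * z i)%N =
  combo r x *+ a + combo r y *+ b + combo r z *+ c.
Proof.
rewrite /combo -!sumrMnl -!big_split /=; apply: eq_bigr => i _.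
by rewrite !mulrnDr !mulrnA; congr (_ + _ + _); rewrite mulrnAC.
Qed.

Lemma wcombo_lin w r a b c (x y z : nat -> nat) :
  wcombo w r (fun i => a * x i + b * y i + c * z i)%N =
  a%:R * wcombo w r x + b%:R * wcombo w r y + c%:R * wcombo w r z.
Proof.
rewrite /wcombo !mulr_sumr -!big_split /=; apply: eq_bigr => i _.
rewrite !natrD !natrM; ring.
Qed.

Lemma eq_wcombo w w' r n :
  (forall i, (i < r)%N -> w i = w' i) -> wcombo w r n = wcombo w' r n.
Proof. by move=> eq_w; apply: eq_bigr => i _; rewrite eq_w. Qed.

Lemma addIm_mulrn (a b c : M) n : a + c *+ n = b + c *+ n -> a = b.
Proof.
elim: n a b => [|n IHn] a b; first by rewrite !mulr0n !addr0.
by rewrite mulrSr !addrA => /addIm; apply: IHn.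
Qed.

Definition separating_weight r (I : finType) (P : I -> (nat -> nat) * (nat -> nat))
    (w : nat -> rat) :=
  (forall n m, combo r n = combo r m -> wcombo w r n = wcombo w r m) /\
  (forall i, combo r (P i).1 <> combo r (P i).2 ->
     wcombo w r (P i).1 <> wcombo w r (P i).2).

Definition has_separating_weights r :=
  forall (I : finType) (P : I -> (nat -> nat) * (nat -> nat)),
  exists w, separating_weight r P w.

Lemma separating_weights0 : has_separating_weights 0.
Proof.
move=> I P; exists (fun _ => 0); split=> [n m _|i].
  by rewrite /wcombo !big_ord0.
by rewrite /combo !big_ord0.
Qed.

(* The weight of [s r] is forced to be (w m0 - w n0) / k, and a relation over
   r.+1 generators, multiplied by k, becomes one over r generators. *)
Lemma separating_weightsS_dependent r k n0 m0 :
  (0 < k)%N -> combo r n0 + s r *+ k = combo r m0 ->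
  has_separating_weights r -> has_separating_weights r.+1.
Proof.
move=> k_gt0 rel_r IHr I P.
pose elim_r n m i := (k * n i + n r * m0 i + m r * n0 i)%N.
have combo_elim n m :
    combo r (elim_r n m) = combo r.+1 n *+ k + combo r n0 *+ (n r + m r).
  rewrite combo_lin !comboS -rel_r !mulrnDl !mulrnDr [s r *+ k *+ _]mulrnAC.
  by rewrite -!addrA; congr (_ + _); rewrite addrCA addrC.
have [w [w_compat w_sep]] := IHr I (fun i => (elim_r (P i).1 (P i).2, elim_r (P i).2 (P i).1)).
have k_neq0 : (k%:R : rat) != 0 by rewrite pnatr_eq0 -lt0n.
pose w' i := if i == r then (wcombo w r m0 - wcombo w r n0) / k%:R else w i.
have w'_r n : wcombo w' r n = wcombo w r n.
  by apply: eq_wcombo => i lt_ir; rewrite /w' ifN // neq_ltn lt_ir.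
have wcombo_elim n m : wcombo w r (elim_r n m) =
    k%:R * wcombo w' r.+1 n + (n r + m r)%:R * wcombo w r n0.
  by rewrite wcombo_lin wcomboS w'_r /w' eqxx natrD; field.
have combo_elimE n m : (combo r.+1 n = combo r.+1 m) <->
    (combo r (elim_r n m) = combo r (elim_r m n)).
  rewrite !combo_elim addnC; split=> [-> //|]; by move/addIm/(mulnIm k_gt0).
exists w'; split=> [n m /combo_elimE /w_compat|i /combo_elimE /w_sep neq_w eq_w'].
  by rewrite !wcombo_elim addnC => /addIr /(mulfI k_neq0).
by apply: neq_w; rewrite !wcombo_elim eq_w' addnC.
Qed.

(* [s r] is free over the earlier generators: give it a weight exceeding each
   of the finitely many values at which a separated pair would collide. *)
Lemma separating_weightsS_free r :
  (forall k n0 m0, (0 < k)%N -> combo r n0 + s r *+ k <> combo r m0) ->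
  has_separating_weights r -> has_separating_weights r.+1.
Proof.
move=> free_r IHr I P.
have [w [w_compat w_sep]] := IHr I P.
have combo_eq n m : combo r.+1 n = combo r.+1 m -> n r = m r /\ combo r n = combo r m.
  have no_lt n' m' : combo r.+1 n' = combo r.+1 m' -> ~ (n' r < m' r)%N.
    rewrite !comboS => eq_nm lt_nm; apply: (free_r (m' r - n' r)%N m' n').
      by rewrite subn_gt0.
    apply: (@addIm_mulrn _ _ (s r) (n' r)).
    by rewrite -addrA -mulrnDr subnK ?eq_nm // ltnW.
  move=> eq_nm; have [lt_nm|lt_mn|eq_r] := ltngtP (n r) (m r).
  - by case: (no_lt n m).
  - by case: (no_lt m n).
  by split=> //; move: eq_nm; rewrite !comboS eq_r => /addIm_mulrn.
pose b i := (wcombo w r (P i).2 - wcombo w r (P i).1) /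
            (((P i).1 r)%:R - ((P i).2 r)%:R).
pose t := 1 + \sum_i `|b i|.
pose w' i := if i == r then t else w i.
have w'S n : wcombo w' r.+1 n = wcombo w r n + (n r)%:R * t.
  rewrite wcomboS /w' eqxx; congr (_ + _).
  by apply: eq_wcombo => i lt_ir; rewrite ifN // neq_ltn lt_ir.
exists w'; split=> [n m /combo_eq [eq_r /w_compat eq_w] | i neq_P].
  by rewrite !w'S eq_r eq_w.
rewrite !w'S; have [eq_r|neq_r] := eqVneq ((P i).1 r) ((P i).2 r).
  by rewrite eq_r => /addIr; apply: w_sep => eq_P; apply: neq_P; rewrite !comboS eq_P eq_r.
move=> eq_w; have d_neq0 : ((P i).1 r)%:R - ((P i).2 r)%:R != 0 :> rat.
  by rewrite subr_eq0 eqr_nat.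
have t_eq : t = b i.
  apply: (mulIf d_neq0); rewrite divfK // mulrBr; move: eq_w.
  by rewrite ![t * _]mulrC; lra.
have : `|b i| <= \sum_j `|b j| by rewrite (bigD1 i) //= lerDl sumr_ge0.
by rewrite -t_eq /t; have := ler_norm t; rewrite /t; lra.
Qed.

Lemma separating_weights r : has_separating_weights r.
Proof.
elim: r => [|r IHr]; first exact: separating_weights0.
have [[k [n0 [m0 [k_gt0 rel_r]]]]|free_r] :=
  classic (exists k n0 m0, (0 < k)%N /\ combo r n0 + s r *+ k = combo r m0).
  exact: separating_weightsS_dependent rel_r IHr.
apply: separating_weightsS_free IHr => k n0 m0 k_gt0 rel_r.
by apply: free_r; exists k, n0, m0.
Qed.

End SeparatingWeights.

Lemma rat_weight (M : nmodType) : torsionfree_cancellative_monoid M ->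
  forall S : seq M, exists phi : M -> rat,
    {in S &, {morph phi : a b / a + b}} /\ {in S &, injective phi}.
Proof.
move=> [addIm mulnIm] S; pose r := size S; pose s i := nth 0 S i.
pose e (j : nat) i := nat_of_bool (i == j).
have [w [w_compat w_sep]] := separating_weights addIm mulnIm s r
  (fun ij : 'I_r * 'I_r => (e ij.1, e ij.2)).
have combo_e (j : 'I_r) : combo s r (e j) = s j.
  rewrite /combo (bigD1 j) //= big1 ?addr0 /e ?eqxx // => i /negbTE.
  by rewrite -val_eqE /= => ->.
pose rep x := epsilon (inhabits (fun _ => 0%N)) (fun n => combo s r n = x).
have phi_combo n : wcombo w r (rep (combo s r n)) = wcombo w r n.
  by apply/w_compat/(epsilon_spec (inhabits _) (fun m => combo s r m = _)); exists n.
have memS a : a \in S -> exists j : 'I_r, a = combo s r (e j).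
  rewrite -index_mem => aS; exists (Ordinal aS).
  by rewrite combo_e /s nth_index // -index_mem.
exists (fun x => wcombo w r (rep x)); split.
  move=> _ _ /memS [i ->] /memS [j ->] /=.
  have -> : combo s r (e i) + combo s r (e j) =
            combo s r (fun l => 1 * e i l + 1 * e j l + 0 * e i l)%N.
    by rewrite combo_lin !mulr1n mulr0n addr0.
  by rewrite !phi_combo wcombo_lin !mul1r mul0r addr0.
move=> _ _ /memS [i ->] /memS [j ->]; rewrite !phi_combo => eq_w.
by apply: NNPP => neq_combo; exact: (w_sep (i, j) neq_combo eq_w).
Qed.

Lemma count_lt_sub (T : eqType) (a1 a2 : pred T) (s : seq T) x :
  subpred a1 a2 -> x \in s -> a2 x -> ~~ a1 x -> (count a1 s < count a2 s)%N.
Proof.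
move=> s12; elim: s => //= y s IHs; rewrite inE => /orP [/eqP <- a2x na1x|xs a2x na1x].
  by rewrite a2x (negbTE na1x) add0n add1n ltnS sub_count.
by rewrite -addnS leq_add ?IHs //; case: (a1 y) (s12 y) => // ->.
Qed.

Lemma uniq_map_inj (T1 T2 : eqType) (f : T1 -> T2) (s : seq T1) :
  uniq (map f s) -> {in s &, injective f}.
Proof.
elim: s => //= z s IHs /andP [fz_s us] x y; rewrite !inE.
move=> /orP [/eqP -> | xs] /orP [/eqP -> | ys] // eq_f.
- by move: fz_s; rewrite eq_f map_f.
- by move: fz_s; rewrite -eq_f map_f.
- exact: IHs.
Qed.

Section Subring.
Variables (K : comPzRingType) (R : K -> Prop).
Hypothesis R1 : R 1.
Hypothesis RB : forall x y, R x -> R y -> R (x - y).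
Hypothesis RM : forall x y, R x -> R y -> R (x * y).

Lemma R0 : R 0.
Proof. by rewrite -(subrr 1); apply: RB. Qed.

Lemma RN x : R x -> R (- x).
Proof. by move=> Rx; rewrite -sub0r; apply: RB Rx; apply: R0. Qed.

Lemma RD x y : R x -> R y -> R (x + y).
Proof. by move=> Rx Ry; rewrite -[y]opprK; apply: RB Rx (RN Ry). Qed.

Lemma RX x n : R x -> R (x ^+ n).
Proof. by move=> Rx; elim: n => [|n IHn]; rewrite ?expr0 // exprS; apply: RM. Qed.

Lemma R_sum (I : Type) (r : seq I) (P : pred I) (F : I -> K) :
  (forall i, P i -> R (F i)) -> R (\sum_(i <- r | P i) F i).
Proof. by move=> RF; elim/big_rec: _ => [|i x Pi Rx]; [apply: R0 | apply: RD (RF i Pi) Rx]. Qed.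

Lemma R_prod (I : Type) (r : seq I) (P : pred I) (F : I -> K) :
  (forall i, P i -> R (F i)) -> R (\prod_(i <- r | P i) F i).
Proof. by move=> RF; elim/big_rec: _ => [|i x Pi Rx] //; apply: RM (RF i Pi) Rx. Qed.

Definition Rsubmod (T : K -> Prop) :=
  [/\ T 0, (forall x y, T x -> T y -> T (x + y)) & (forall r x, R r -> T x -> T (r * x))].

Lemma Rsubmod_R : Rsubmod R.
Proof. by split; [apply: R0 | apply: RD | apply: RM]. Qed.

Lemma Rsubmod_sum T : Rsubmod T -> forall (I : Type) (r : seq I) (P : pred I) (F : I -> K),
  (forall i, P i -> T (F i)) -> T (\sum_(i <- r | P i) F i).
Proof.
by move=> [T0 TD _] I r P F TF; elim/big_rec: _ => [|i x Pi Tx] //; apply: TD (TF i Pi) Tx.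
Qed.

Lemma Rsubmod_sub T x y : Rsubmod T -> T x -> T y -> T (x - y).
Proof. by move=> [_ TD TM] Tx Ty; apply: TD Tx _; rewrite -mulN1r; apply: TM (RN R1) Ty. Qed.

Definition add_Rmul (T : K -> Prop) (x : K) : K -> Prop :=
  fun z => exists t r, [/\ T t, R r & z = t + x * r].

Lemma Rsubmod_add_Rmul T x : Rsubmod T -> Rsubmod (add_Rmul T x).
Proof.
move=> [T0 TD TM]; split.
- by exists 0, 0; rewrite mulr0 addr0; split=> //; apply: R0.
- move=> _ _ [t1 [r1 [Tt1 Rr1 ->]]] [t2 [r2 [Tt2 Rr2 ->]]].
  by exists (t1 + t2), (r1 + r2); split; [apply: TD | apply: RD | ring].
- move=> r _ Rr [t [r' [Tt Rr' ->]]].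
  by exists (r * t), (r * r'); split; [apply: TM | apply: RM | ring].
Qed.

(* A finitely supported sum of the [p.2 X^p.1] with rational exponents [p.1]
   is encoded by the list of the pairs [p]; [mul_coef F G c] is the
   coefficient of [X^c] in the product of two such sums. *)
Definition mul_coef (F G : seq (rat * K)) (c : rat) :=
  \sum_(p <- F) \sum_(q <- G | p.1 + q.1 == c) p.2 * q.2.

Definition coef_prod (l : seq (rat * K)) := \prod_(p <- l) p.2.

Lemma coef_prod_cons p l : coef_prod (p :: l) = p.2 * coef_prod l.
Proof. by rewrite /coef_prod big_cons. Qed.

Lemma coef_prod_cat l l' : coef_prod (l ++ l') = coef_prod l * coef_prod l'.
Proof. by rewrite /coef_prod big_cat. Qed.

Lemma R_coef_prod (F l : seq (rat * K)) :
  (forall p, p \in F -> R p.2) -> {subset l <= F} -> R (coef_prod l).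
Proof. by move=> RF lF; rewrite /coef_prod big_seq; apply: R_prod => p /lF /RF. Qed.

Lemma sum_coef_at_exp (G : seq (rat * K)) q : uniq (map fst G) -> q \in G ->
  \sum_(q' <- G | q'.1 == q.1) q'.2 = q.2.
Proof.
elim: G => //= q' G IHG /andP [q'G uG]; rewrite inE big_cons => /orP [/eqP ->|qG].
  rewrite eqxx big1_seq ?addr0 // => p /andP [/eqP eq_p pG].
  by move: q'G; rewrite -eq_p map_f.
suff /negbTE -> : q'.1 != q.1 by apply: IHG.
by apply: contra q'G => /eqP ->; rewrite map_f.
Qed.

Lemma mul_coef_rem (F G : seq (rat * K)) top c : top \in F ->
  mul_coef F G c = top.2 * \sum_(q <- G | top.1 + q.1 == c) q.2 + mul_coef (rem top F) G c.
Proof. by move=> topF; rewrite /mul_coef (perm_big _ (perm_to_rem topF)) big_cons mulr_sumr. Qed.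

Lemma exists_max_exp (F : seq (rat * K)) : F != [::] ->
  exists2 top, top \in F & forall p, p \in F -> p.1 <= top.1.
Proof.
elim: F => //= p F IHF _; have [-> | /IHF [t tF t_max]] := eqVneq F [::].
  by exists p => [|q]; rewrite !inE // => /eqP ->.
have [le_pt|lt_tp] := lerP p.1 t.1.
  by exists t => [|q]; rewrite inE ?tF ?orbT // => /orP [/eqP -> | /t_max].
exists p => [|q]; rewrite inE ?eqxx // => /orP [/eqP -> // | /t_max le_qt].
exact: le_trans le_qt (ltW lt_tp).
Qed.

(* McCoy's argument: induction on the number of exponents of [G] above that of [q]. *)
Lemma top_power_mul_mem T y (F G : seq (rat * K)) top :
  Rsubmod T -> uniq (map fst F) -> uniq (map fst G) -> (forall p, p \in F -> R p.2) ->
  top \in F -> (forall p, p \in F -> p.1 <= top.1) ->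
  (forall c, T (y * mul_coef F G c)) ->
  forall q, q \in G -> T (y * top.2 ^+ (size G).+1 * q.2).
Proof.
move=> subT uF uG RF topF top_max yFG; have [_ _ TM] := id subT.
pose a := top.2; have Ra : R a := RF _ topF.
have T_exp m n z : (m <= n)%N -> T (y * a ^+ m * z) -> T (y * a ^+ n * z).
  move=> le_mn Tz; rewrite -(subnK le_mn) exprD.
  by rewrite (_ : y * _ * z = a ^+ (n - m) * (y * a ^+ m * z)); [apply: TM (RX _ Ra) Tz | ring].
have rem_lt p : p \in rem top F -> p.1 < top.1.
  rewrite mem_rem_uniq ?(map_uniq uF) // inE => /andP [neq_p pF].
  rewrite lt_def top_max // andbT; apply: contra neq_p => /eqP eq_p1.
  by apply/eqP; apply: (uniq_map_inj uF).
pose above (q : rat * K) := count (fun q' : rat * K => q.1 < q'.1) G.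
suff above_mem q : q \in G -> T (y * a ^+ (above q).+1 * q.2).
  by move=> q qG; apply: T_exp (above_mem q qG); rewrite ltnS count_size.
have [n] := ubnP (above q); elim: n q => // n IHn q /ltnSE le_qn qG.
have := yFG (top.1 + q.1); rewrite (mul_coef_rem _ _ topF).
have -> : \sum_(q' <- G | top.1 + q'.1 == top.1 + q.1) q'.2 = q.2.
  by rewrite -(sum_coef_at_exp uG qG); apply: eq_bigl => q'; rewrite (inj_eq (addrI _)).
set rest := mul_coef _ _ _ => T_coef.
have T_rest : T (a ^+ above q * (y * rest)).
  rewrite /rest /mul_coef !mulr_sumr big_seq; apply: (Rsubmod_sum subT) => p pF'.
  rewrite !mulr_sumr big_seq_cond; apply: (Rsubmod_sum subT) => q' /andP [q'G /eqP eq_c].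
  rewrite (_ : _ * _ = p.2 * (y * a ^+ above q * q'.2)); last by ring.
  apply: TM; first by apply: RF; apply: mem_rem pF'.
  have lt_qq' : q.1 < q'.1 by have := rem_lt _ pF'; lra.
  have lt_above : (above q' < above q)%N.
    have sub_above : subpred (fun z : rat * K => q'.1 < z.1) (fun z => q.1 < z.1).
      by move=> z; apply: lt_trans.
    by apply: (count_lt_sub sub_above q'G) => //=; rewrite ltxx.
  exact: T_exp lt_above (IHn _ (leq_trans lt_above le_qn) q'G).
rewrite (_ : _ * q.2 = a ^+ above q * (y * (a * q.2 + rest)) - a ^+ above q * (y * rest)).
  by apply: (Rsubmod_sub subT (TM _ _ (RX _ Ra) T_coef) T_rest).
by rewrite exprS; ring.
Qed.

(* If [y B = t + y a r] and [y B' = t' + y a^m r'] with [t, t'] in [T], then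
   [y B B' = B t' + a^m r' t + y a^(m+1) r r']. *)
Lemma block_mul_mem T y a (F G : seq (rat * K)) N :
  Rsubmod T -> R a -> (forall p, p \in F -> R p.2) -> (forall q, q \in G -> R q.2) ->
  (forall l1 l2, size l1 = N -> size l2 = N -> {subset l1 <= F} -> {subset l2 <= G} ->
     add_Rmul T (y * a) (y * coef_prod l1 * coef_prod l2)) ->
  forall m l1 l2, (m * N <= size l1)%N -> (m * N <= size l2)%N ->
    {subset l1 <= F} -> {subset l2 <= G} ->
    add_Rmul T (y * a ^+ m) (y * coef_prod l1 * coef_prod l2).
Proof.
move=> [T0 TD TM] Ra RF RG blockN.
elim=> [|m IHm] l1 l2 size1 size2 l1F l2G.
  exists 0, (coef_prod l1 * coef_prod l2); split=> //.
    by apply: RM; [apply: R_coef_prod RF l1F | apply: R_coef_prod RG l2G].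
  by rewrite expr0; ring.
rewrite mulSn in size1 size2.
have [t [r [Tt Rr Edrop]]] : add_Rmul T (y * a ^+ m)
    (y * coef_prod (drop N l1) * coef_prod (drop N l2)).
  apply: IHm; rewrite ?size_drop; try lia.
    by move=> x /mem_drop /l1F.
  by move=> x /mem_drop /l2G.
have [t' [r' [Tt' Rr' Etake]]] : add_Rmul T (y * a)
    (y * coef_prod (take N l1) * coef_prod (take N l2)).
  apply: blockN; rewrite ?size_takel; try lia.
    by move=> x /mem_take /l1F.
  by move=> x /mem_take /l2G.
have R_take : R (coef_prod (take N l1) * coef_prod (take N l2)).
  by apply: RM; [apply: (R_coef_prod RF) => x /mem_take /l1F
                | apply: (R_coef_prod RG) => x /mem_take /l2G].
exists (coef_prod (take N l1) * coef_prod (take N l2) * t + a ^+ m * r * t'), (r * r').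
split; [by apply: TD; apply: TM => //; apply: RM => //; apply: RX | exact: RM |].
have -> : t = y * coef_prod (drop N l1) * coef_prod (drop N l2) - y * a ^+ m * r.
  by rewrite Edrop addrK.
have -> : t' = y * coef_prod (take N l1) * coef_prod (take N l2) - y * a * r'.
  by rewrite Etake addrK.
rewrite -{1}(cat_take_drop N l1) -{1}(cat_take_drop N l2) !coef_prod_cat exprS.
ring.
Qed.

(* Either the top coefficient occurs [k] times among the factors from [F], or
   [k * N'] factors come from [rem top F]; one factor from [G] absorbs the
   remaining multiple of [y * top.2 ^+ k]. *)
Lemma top_split_mul_mem T y (F G : seq (rat * K)) top k N' :
  Rsubmod T -> uniq F -> (forall p, p \in F -> R p.2) -> (forall q, q \in G -> R q.2) ->
  top \in F -> (0 < k)%N ->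
  (forall q, q \in G -> T (y * top.2 ^+ k * q.2)) ->
  (forall l1 l2, (k * N' <= size l1)%N -> (k * N' <= size l2)%N ->
     {subset l1 <= rem top F} -> {subset l2 <= G} ->
     add_Rmul T (y * top.2 ^+ k) (y * coef_prod l1 * coef_prod l2)) ->
  forall l1 l2, size l1 = (k * N' + k)%N -> size l2 = (k * N' + k)%N ->
    {subset l1 <= F} -> {subset l2 <= G} -> T (y * coef_prod l1 * coef_prod l2).
Proof.
move=> [_ TD TM] uF RF RG topF k_gt0 top_mem block_mem l1 l2 size1 size2 l1F l2G.
pose a := top.2; have Ra : R a := RF _ topF.
pose c := count (pred1 top) l1; pose l1' := [seq p <- l1 | p != top].
have prod1 : coef_prod l1 = a ^+ c * coef_prod l1'.
  rewrite /coef_prod big_filter (bigID (pred1 top)) /= (eq_bigr (fun=> a)); last first.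
    by move=> p /eqP ->.
  by rewrite big_const_seq -Monoid.iteropE.
have l1'F : {subset l1' <= rem top F}.
  by move=> p; rewrite mem_filter mem_rem_uniq // inE => /andP [-> /l1F].
have size1' : size l1' = (k * N' + k - c)%N.
  by rewrite size_filter -size1 -(count_predC (pred1 top) l1) addKn.
case: l2 size2 l2G => [|v l2] /= size2 l2G; first by lia.
have vG : v \in G by apply: l2G; rewrite inE eqxx.
have l2'G : {subset l2 <= G} by move=> x xl2; apply: l2G; rewrite inE xl2 orbT.
have R_l1' : R (coef_prod l1') by apply: (R_coef_prod _ l1'F) => p /mem_rem /RF.
have R_l2 : R (coef_prod l2) := R_coef_prod RG l2'G.
rewrite prod1 coef_prod_cons.
have [le_kc|lt_ck] := leqP k c.
  rewrite (_ : _ * _ = a ^+ (c - k) * coef_prod l1' * coef_prod l2 * (y * a ^+ k * v.2)).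
    by apply: TM (top_mem _ vG); apply: RM R_l2; apply: RM R_l1'; apply: RX.
  by rewrite -{1}(subnK le_kc) exprD; ring.
have size1'_ge : (k * N' <= size l1')%N by rewrite size1'; lia.
have size2_ge : (k * N' <= size l2)%N.
  by rewrite -ltnS size2 -addn1 leq_add2l.
have [t [r [Tt Rr E]]] := block_mem l1' l2 size1'_ge size2_ge l1'F l2'G.
rewrite (_ : _ * _ = a ^+ c * v.2 * t + a ^+ c * r * (y * a ^+ k * v.2)).
  apply: TD; first by apply: TM Tt; apply: RM (RX _ Ra) (RG _ vG).
  by apply: TM (top_mem _ vG); apply: RM (RX _ Ra) Rr.
have -> : t = y * coef_prod l1' * coef_prod l2 - y * a ^+ k * r by rewrite E addrK.
by rewrite /a; ring.
Qed.

(* Induction on the number of terms of [F]: the terms below the top one satisfy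
   the hypothesis modulo [y * top.2 * R]. *)
Lemma mul_coef_power_mem T y (F G : seq (rat * K)) :
  Rsubmod T -> uniq (map fst F) -> uniq (map fst G) ->
  (forall p, p \in F -> R p.2) -> (forall q, q \in G -> R q.2) ->
  (forall c, T (y * mul_coef F G c)) ->
  exists N, forall l1 l2, size l1 = N -> size l2 = N ->
    {subset l1 <= F} -> {subset l2 <= G} -> T (y * coef_prod l1 * coef_prod l2).
Proof.
have [n] := ubnP (size F); elim: n T y F => // n IHn T y F /ltnSE size_F.
move=> subT uF uG RF RG yFG; have [-> | F_neq0] := eqVneq F [::].
  by exists 1%N => [[|p l1]] // l2 _ _ /(_ p); rewrite !inE eqxx => /(_ isT).
have [top topF top_max] := exists_max_exp F_neq0.
pose F' := rem top F.
have size_F' : (size F' < n)%N.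
  by rewrite size_rem //; case: (F) F_neq0 size_F.
have uF' : uniq (map fst F').
  by move: uF; rewrite (perm_uniq (perm_map fst (perm_to_rem topF))) => /andP [].
have RF' p : p \in F' -> R p.2 by move/mem_rem/RF.
have yF'G c : add_Rmul T (y * top.2) (y * mul_coef F' G c).
  exists (y * mul_coef F G c), (- \sum_(q <- G | top.1 + q.1 == c) q.2); split=> //.
    by apply: RN; rewrite big_seq_cond; apply: R_sum => q /andP [/RG].
  by rewrite (mul_coef_rem _ _ topF); ring.
have [N' blockN'] := IHn _ _ F' size_F' (Rsubmod_add_Rmul _ subT) uF' uG RF' RG yF'G.
exists ((size G).+1 * N' + (size G).+1)%N.
apply: (top_split_mul_mem subT (map_uniq uF) RF RG topF) => //.
  exact: (top_power_mul_mem subT uF uG RF topF top_max yFG).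
exact: (block_mul_mem subT (RF _ topF) RF' RG blockN').
Qed.

Lemma coef_prod_colon (P : K -> Prop) (F : seq (rat * K)) :
  (forall z, (forall p, p \in F -> P (z * p.2)) -> P z) ->
  forall N w, (forall l, size l = N -> {subset l <= F} -> P (w * coef_prod l)) -> P w.
Proof.
move=> colonF; elim=> [|N IHN] w wF.
  have nilF : {subset [::] <= F} by [].
  by have := wF [::] erefl nilF; rewrite /coef_prod big_nil mulr1.
apply: IHN => l size_l lF; apply: colonF => p pF.
have pl_F : {subset p :: l <= F} by move=> x; rewrite inE => /orP [/eqP -> | /lF].
by have := wF (p :: l) (congr1 S size_l) pl_F; rewrite coef_prod_cons -mulrA [coef_prod l * _]mulrC.
Qed.

End Subring.

Lemma sum_partition_key (V : nmodType) (I J : eqType) (L : seq I) (key : I -> J)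
    (Q : pred J) (v : I -> V) :
  \sum_(x <- L | Q (key x)) v x =
  \sum_(j <- undup (map key L) | Q j) \sum_(x <- L | key x == j) v x.
Proof.
under [RHS]eq_bigr do rewrite big_mkcond.
rewrite exchange_big big_mkcond /=; apply: eq_big_seq => x xL.
rewrite big_mkcond (bigD1_seq (key x)) ?undup_uniq ?mem_undup ?map_f //= eqxx.
by rewrite big1 ?addr0 // => j /negbTE; rewrite eq_sym => ->; case: (Q j).
Qed.

Lemma torsionfree_cancellative_pair (G : nmodType) :
  torsionfree_cancellative_monoid G -> torsionfree_cancellative_monoid (nat * G)%type.
Proof.
move=> [addIG mulnIG]; split=> [[a1 a2] [b1 b2] [c1 c2] [/addIn -> /addIG -> //] |].
move=> n [a1 a2] [b1 b2] n_gt0 eq_ab.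
have mulrn_pair (x : nat * G) m : x *+ m = (x.1 *+ m, x.2 *+ m).
  by elim: m => [|m IHm]; rewrite ?mulr0n // !mulrS IHm.
have mulrn_nat (x m : nat) : x *+ m = (x * m)%N.
  by elim: m => [|m IHm]; rewrite ?muln0 // mulrS IHm mulnS.
move: eq_ab; rewrite !mulrn_pair !mulrn_nat /= => -[/eqP + /(mulnIG _ _ _ n_gt0) ->].
by rewrite eqn_pmul2r // => /eqP ->.
Qed.

Section IdealGen.
Variables (K : fieldType) (R : K -> Prop).
Hypothesis R1 : R 1.
Hypothesis RM : forall x y, R x -> R y -> R (x * y).

Lemma Rsubmod_ideal_gen S : Rsubmod R (ideal_gen R S).
Proof.
split.
- by exists [::]; rewrite big_nil.
- move=> _ _ [s1 [R1s S1s ->]] [s2 [R2s S2s ->]]; exists (s1 ++ s2).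
  split; rewrite ?big_cat // => p; rewrite mem_cat => /orP [].
  + exact: R1s.
  + exact: R2s.
  + exact: S1s.
  + exact: S2s.
- move=> r _ Rr [s [Rs Ss ->]]; exists [seq (r * p.1, p.2) | p <- s]; split.
  + by move=> q /mapP [p ps ->]; apply: RM Rr (Rs p ps).
  + by move=> q /mapP [p ps ->]; apply: Ss p ps.
  + by rewrite big_map mulr_sumr; apply: eq_bigr => p _; rewrite mulrA.
Qed.

Lemma ideal_gen_mem (S : K -> Prop) y : S y -> ideal_gen R S y.
Proof. by exists [:: (1, y)]; split=> [p|p|]; rewrite ?big_seq1 ?mul1r // inE => /eqP ->. Qed.

Lemma ideal_gen_min (T S : K -> Prop) :
  Rsubmod R T -> (forall y, S y -> T y) -> forall z, ideal_gen R S z -> T z.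
Proof.
move=> subT ST _ [s [Rs Ss ->]]; have [_ _ TM] := id subT.
by rewrite big_seq; apply: (Rsubmod_sum subT) => p ps; apply: TM (Rs p ps) (ST _ (Ss p ps)).
Qed.

End IdealGen.

Lemma nz_submod_scale (K : fieldType) (R : K -> Prop) x E :
  x != 0 -> nz_submod R E -> nz_submod R (scale_set x E).
Proof.
move=> x_neq0 [E0 ED EM [e e_neq0 Ee]]; split.
- by exists 0; rewrite ?mulr0.
- by move=> _ _ [e1 Ee1 ->] [e2 Ee2 ->]; exists (e1 + e2); rewrite ?mulrDr //; apply: ED.
- by move=> r _ Rr [e1 Ee1 ->]; exists (r * e1); [apply: EM | rewrite mulrCA].
- by exists (x * e); [rewrite mulf_neq0 | exists e].
Qed.

Section GradedDomain.
Variables (G : nmodType) (K : fieldType) (R : K -> Prop) (Rg : G -> K -> Prop).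
Hypothesis R1 : R 1.
Hypothesis RB : forall x y, R x -> R y -> R (x - y).
Hypothesis RM : forall x y, R x -> R y -> R (x * y).
Hypothesis Rg0 : forall a, Rg a 0.
Hypothesis RgB : forall a x y, Rg a x -> Rg a y -> Rg a (x - y).
Hypothesis Rg_R : forall a x, Rg a x -> R x.
Hypothesis RgM : forall a b x y, Rg a x -> Rg b y -> Rg (a + b) (x * y).
Hypothesis R_hdec : forall x, R x -> exists (s : seq G) (h : G -> K),
  [/\ uniq s, (forall a, a \in s -> Rg a (h a)) & x = \sum_(a <- s) h a].
Hypothesis hdec_direct : forall (s : seq G) (h : G -> K),
  uniq s -> (forall a, a \in s -> Rg a (h a)) ->
  \sum_(a <- s) h a = 0 -> forall a, a \in s -> h a = 0.

Lemma RgD a x y : Rg a x -> Rg a y -> Rg a (x + y).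
Proof.
move=> Rx Ry; have -> : x + y = x - (0 - y) by rewrite sub0r opprK.
exact: RgB Rx (RgB (Rg0 a) Ry).
Qed.

Lemma Rg_sum a (I : Type) (r : seq I) (P : pred I) (F : I -> K) :
  (forall i, P i -> Rg a (F i)) -> Rg a (\sum_(i <- r | P i) F i).
Proof. by move=> RF; elim/big_rec: _ => [|i x Pi Rx]; [apply: Rg0 | apply: RgD (RF i Pi) Rx]. Qed.

Definition is_hdec (x : K) (d : seq G * (G -> K)) :=
  [/\ uniq d.1, (forall a, a \in d.1 -> Rg a (d.2 a)) & x = \sum_(a <- d.1) d.2 a].

Lemma hdec_unique x d d' : is_hdec x d -> is_hdec x d' ->
  forall a, a \in d'.1 -> d'.2 a = if a \in d.1 then d.2 a else 0.
Proof.
move=> [ud Rgd xd] [ud' Rgd' xd'] a ad'.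
pose L := undup (d.1 ++ d'.1); pose ext (e : seq G * (G -> K)) b := if b \in e.1 then e.2 b else 0.
have sum_ext e : uniq e.1 -> {subset e.1 <= L} -> \sum_(b <- L) ext e b = \sum_(b <- e.1) e.2 b.
  move=> ue eL; rewrite -big_mkcond -big_filter; apply: perm_big.
  apply: uniq_perm; rewrite ?filter_uniq ?undup_uniq // => b.
  by rewrite mem_filter andb_idr // => /eL.
have dL : {subset d.1 <= L} by move=> b bd; rewrite mem_undup mem_cat bd.
have d'L : {subset d'.1 <= L} by move=> b bd'; rewrite mem_undup mem_cat bd' orbT.
have Rg_ext e b : (forall b, b \in e.1 -> Rg b (e.2 b)) -> Rg b (ext e b).
  by rewrite /ext; case: ifP => [be /(_ b be) // | _ _]; apply: Rg0.
have := @hdec_direct L (fun b => ext d b - ext d' b) (undup_uniq _)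
  (fun b _ => RgB (Rg_ext d b Rgd) (Rg_ext d' b Rgd')).
rewrite sumrB !sum_ext // -xd -xd' subrr => /(_ erefl a (d'L a ad')) /eqP.
by rewrite subr_eq0 /ext ad' => /eqP ->.
Qed.

Lemma hcomp_is_hdec x d y : is_hdec x d -> hcomp Rg x y ->
  y = 0 \/ exists2 a, a \in d.1 & y = d.2 a.
Proof.
move=> xd [s [h [us Rgh xh [a as_ ->]]]].
have sh : is_hdec x (s, h) by split.
have /= -> := hdec_unique xd sh as_; case: ifP => [ad|_]; last by left.
by right; exists a.
Qed.

Definition hdec (x : K) : seq G * (G -> K) :=
  epsilon (inhabits ([::], fun _ => 0)) (is_hdec x).

Lemma hdecP x : R x -> is_hdec x (hdec x).
Proof.
move=> Rx; apply: epsilon_spec; have [s [h [us Rgh xh]]] := R_hdec Rx.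
by exists (s, h).
Qed.

(* The terms of [f] as an element of the (nat * G)-graded ring R[X]: the
   homogeneous components of its coefficients, tagged with (degree, grade). *)
Definition hterms (f : {poly K}) : seq ((nat * G) * K) :=
  [seq ((i, a), (hdec f`_i).2 a) | i <- iota 0 (size f), a <- (hdec f`_i).1].

Lemma mem_hterms f p : p \in hterms f -> exists i a,
  [/\ (i < size f)%N, a \in (hdec f`_i).1 & p = ((i, a), (hdec f`_i).2 a)].
Proof. by case/allpairsPdep=> i [a [i_f a_i ->]]; exists i, a; rewrite mem_iota in i_f. Qed.

Section Terms.
Variable f : {poly K}.
Hypothesis fR : inRX R f.

Lemma hterms_uniq : uniq (map fst (hterms f)).
Proof.
rewrite map_allpairs; apply: allpairs_uniq_dep => [|i _|]; first exact: iota_uniq.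
  by have [] := hdecP (fR i).
by move=> [i a] [j b] _ _ /= [-> ->].
Qed.

Lemma hterms_hcomp p : p \in hterms f ->
  [/\ Rg p.1.2 p.2, R p.2 & hcomp Rg f`_(p.1.1) p.2].
Proof.
case/mem_hterms=> i [a [_ a_i ->]] /=; have [ud Rgd fd] := hdecP (fR i).
split; [exact: Rgd | exact: Rg_R (Rgd a a_i) |].
by exists (hdec f`_i).1, (hdec f`_i).2; split=> //; exists a.
Qed.

Lemma coef_hterms k : f`_k = \sum_(p <- hterms f | p.1.1 == k) p.2.
Proof.
rewrite big_mkcond big_allpairs_dep /=.
rewrite (eq_bigr (fun i => if i == k then f`_i else 0)); last first.
  move=> i _; case: eqP => [-> | _]; last by rewrite big1.
  by have [_ _ fd] := hdecP (fR k); rewrite -fd.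
rewrite -big_mkcond /=; have [lt_kf | le_fk] := ltnP k (size f).
  by rewrite -big_filter filter_pred1_uniq ?iota_uniq ?mem_iota // big_seq1.
rewrite nth_default // big1_seq // => i /andP [/eqP -> _]; exact: nth_default.
Qed.

Lemma poly_hterms : f = \sum_(p <- hterms f) p.2 *: 'X^(p.1.1).
Proof.
apply/polyP => k; rewrite coef_sum coef_hterms big_mkcond /=; apply: eq_bigr => p _.
by rewrite coefZ coefXn eq_sym; case: eqP; rewrite ?mulr1 ?mulr0.
Qed.

Lemma hcomp_hterms i y : hcomp Rg f`_i y -> y = 0 \/ exists2 p, p \in hterms f & y = p.2.
Proof.
have [lt_if | le_fi] := ltnP i (size f).
  case/(hcomp_is_hdec (hdecP (fR i))) => [|[a a_i ->]]; first by left.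
  right; exists ((i, a), (hdec f`_i).2 a) => //.
  by apply/allpairsPdep; exists i, a; rewrite mem_iota.
have d0 : is_hdec f`_i ([::], fun _ => 0) by split; rewrite ?big_nil ?nth_default.
by case/(hcomp_is_hdec d0) => [|[]]; left.
Qed.

Lemma Af_hterm p : p \in hterms f -> Af R Rg f p.2.
Proof. by case/hterms_hcomp=> _ _ fp; apply: (ideal_gen_mem R1); exists p.1.1. Qed.

Lemma Af_coef i : Af R Rg f f`_i.
Proof.
rewrite coef_hterms big_seq_cond; apply: (Rsubmod_sum (Rsubmod_ideal_gen RM _)).
by move=> p /andP [/Af_hterm].
Qed.

End Terms.

Definition hpairs (f g : {poly K}) := [seq (p, q) | p <- hterms f, q <- hterms g].
Definition hdeg (x : ((nat * G) * K) * ((nat * G) * K)) : nat * G := x.1.1 + x.2.1.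
Definition hcoef (x : ((nat * G) * K) * ((nat * G) * K)) : K := x.1.2 * x.2.2.

Definition hprod (f g : {poly K}) (j : nat * G) : K :=
  \sum_(x <- hpairs f g | hdeg x == j) hcoef x.

Definition hprod_support (f g : {poly K}) (k : nat) : seq G :=
  [seq j.2 | j <- undup (map hdeg (hpairs f g)) & j.1 == k].

Section Products.
Variables f g : {poly K}.
Hypothesis fR : inRX R f.
Hypothesis gR : inRX R g.

Lemma mem_hpairs x : x \in hpairs f g -> x.1 \in hterms f /\ x.2 \in hterms g.
Proof. by case/allpairsP=> -[p q] [pf qg ->]. Qed.

Lemma coef_mul_hpairs k : (f * g)`_k = \sum_(x <- hpairs f g | (hdeg x).1 == k) hcoef x.
Proof.
rewrite {1}(poly_hterms fR) {1}(poly_hterms gR) mulr_suml coef_sum.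
rewrite [RHS]big_mkcond /hpairs big_allpairs; apply: eq_bigr => p _.
rewrite mulr_sumr coef_sum; apply: eq_bigr => q _.
rewrite -scalerAl -scalerAr scalerA -exprD coefZ coefXn /hdeg /hcoef /= eq_sym.
by case: eqP; rewrite ?mulr1 ?mulr0.
Qed.

Lemma hprod_Rg k c : Rg c (hprod f g (k, c)).
Proof.
rewrite /hprod big_seq_cond; apply: Rg_sum => x /andP [/mem_hpairs [xf xg] /eqP deg_x].
have [Rg1 _ _] := hterms_hcomp fR xf; have [Rg2 _ _] := hterms_hcomp gR xg.
have -> : c = (hdeg x).2 by rewrite deg_x.
exact: RgM Rg1 Rg2.
Qed.

Lemma coef_mul_hdec k :
  is_hdec (f * g)`_k (hprod_support f g k, fun c => hprod f g (k, c)).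
Proof.
split=> /=.
- rewrite map_inj_in_uniq ?filter_uniq ?undup_uniq // => -[k1 c1] [k2 c2].
  by rewrite !mem_filter /= => /andP [/eqP -> _] /andP [/eqP -> _] ->.
- by move=> c _; apply: hprod_Rg.
rewrite coef_mul_hpairs (sum_partition_key _ _ (fun j => j.1 == k)) big_map big_filter.
by apply: eq_bigr => j /eqP <-; rewrite -surjective_pairing.
Qed.

Lemma hcomp_mul k y : hcomp Rg (f * g)`_k y -> y = 0 \/ exists c, y = hprod f g (k, c).
Proof. by case/(hcomp_is_hdec (coef_mul_hdec k)) => [|[c _ ->]]; [left | right; exists c]. Qed.

Lemma Af_mul_hprod j : Af R Rg (f * g) (hprod f g j).
Proof.
case: j => k c; case: (boolP (c \in hprod_support f g k)) => [c_k | c_nk].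
  apply: (ideal_gen_mem R1); exists k; have [u Rgu fgk] := coef_mul_hdec k.
  by exists (hprod_support f g k), (fun c => hprod f g (k, c)); split=> //; exists c.
rewrite (_ : hprod f g (k, c) = 0); first by have [] := Rsubmod_ideal_gen RM
  (fun y => exists i, hcomp Rg (f * g)`_i y).
rewrite /hprod big1_seq // => x /andP [/eqP deg_x xfg]; case/negP: c_nk.
by apply/mapP; exists (k, c); rewrite // mem_filter eqxx mem_undup -deg_x map_f.
Qed.

Lemma Af_hprod j : Af R Rg f (hprod f g j) /\ Af R Rg g (hprod f g j).
Proof.
have [_ _ Af_fM] := Rsubmod_ideal_gen RM (fun y => exists i, hcomp Rg f`_i y).
have [_ _ Af_gM] := Rsubmod_ideal_gen RM (fun y => exists i, hcomp Rg g`_i y).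
rewrite /hprod big_seq_cond; split; apply: (Rsubmod_sum (Rsubmod_ideal_gen RM _)).
  move=> x /andP [/mem_hpairs [xf xg] _]; rewrite /hcoef mulrC.
  by apply: Af_fM (Af_hterm fR xf); have [] := hterms_hcomp gR xg.
move=> x /andP [/mem_hpairs [xf xg] _].
by apply: Af_gM (Af_hterm gR xg); have [] := hterms_hcomp fR xf.
Qed.

Lemma Af_mul_sub z : Af R Rg (f * g) z -> Af R Rg f z /\ Af R Rg g z.
Proof.
have Af0 h : Af R Rg h 0 by have [] := Rsubmod_ideal_gen RM (fun y => exists i, hcomp Rg h`_i y).
move=> fg_z; split; apply: (ideal_gen_min (Rsubmod_ideal_gen RM _) _ fg_z).
  by move=> y [i /hcomp_mul [-> | [c ->]]]; [apply: Af0 | case: (Af_hprod (i, c))].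
by move=> y [i /hcomp_mul [-> | [c ->]]]; [apply: Af0 | case: (Af_hprod (i, c))].
Qed.

End Products.

Lemma Af_R f z : Af R Rg f z -> R z.
Proof.
apply: (ideal_gen_min (Rsubmod_R R1 RB RM)) => _ [i [s [h [_ Rgh _ [a a_s ->]]]]].
exact: Rg_R (Rgh a a_s).
Qed.

Lemma nz_submod_R : nz_submod R R.
Proof. by have [R0' RD' RM'] := Rsubmod_R R1 RB RM; split=> //; exists 1; rewrite ?oner_neq0. Qed.

Lemma nz_submod_Af f : inRX R f -> f != 0 -> nz_submod R (Af R Rg f).
Proof.
move=> fR f_neq0; have [Af0 AfD AfM] := Rsubmod_ideal_gen RM (fun y => exists i, hcomp Rg f`_i y).
split=> //; exists (lead_coef f); first by rewrite lead_coef_eq0.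
exact: (Af_coef fR (size f).-1).
Qed.

Lemma inRX_mul f g : inRX R f -> inRX R g -> inRX R (f * g).
Proof. by move=> fR gR i; rewrite coefM; apply: (R_sum R1 RB) => j _; apply: RM. Qed.

Lemma inRX_1 : inRX R 1.
Proof. by move=> i; rewrite coef1; case: (i == 0)%N => //; apply: R0 R1 RB. Qed.

Lemma Af_1 : Af R Rg 1 = R.
Proof.
apply: functional_extensionality => z; apply: propositional_extensionality.
split=> [|Rz]; first exact: Af_R.
have := Af_coef inRX_1 0; rewrite coef1 eqxx => Af1.
by rewrite -[z]mulr1; have [_ _ AfM _] := nz_submod_Af inRX_1 (oner_neq0 _); apply: AfM.
Qed.

Definition wterms (phi : nat * G -> rat) (f : {poly K}) : seq (rat * K) :=
  [seq (phi p.1, p.2) | p <- hterms f].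

Lemma wterms_uniq phi (S : seq (nat * G)) f : {in S &, injective phi} ->
  {subset map fst (hterms f) <= S} -> inRX R f -> uniq (map fst (wterms phi f)).
Proof.
move=> phi_inj f_S fR; rewrite -map_comp (map_comp phi fst) map_inj_in_uniq ?hterms_uniq //.
by move=> a b /f_S aS /f_S bS; apply: phi_inj.
Qed.

Lemma R_wterms phi f : inRX R f -> forall p, p \in wterms phi f -> R p.2.
Proof. by move=> fR _ /mapP [p fp ->]; have [] := hterms_hcomp fR fp. Qed.

(* Grouping the terms of [mul_coef] by their degree in [nat * G] gives a sum of
   homogeneous components of coefficients of [f * g]. *)
Lemma Af_mul_coef_wterms phi f g c : inRX R f -> inRX R g ->
  {in map fst (hterms f) ++ map fst (hterms g) &, {morph phi : a b / a + b}} ->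
  Af R Rg (f * g) (mul_coef (wterms phi f) (wterms phi g) c).
Proof.
move=> fR gR phiD; rewrite /mul_coef big_map.
have -> : \sum_(p <- hterms f) \sum_(q <- wterms phi g | (phi p.1, p.2).1 + q.1 == c)
    (phi p.1, p.2).2 * q.2 = \sum_(x <- hpairs f g | phi (hdeg x) == c) hcoef x.
  rewrite [RHS]big_mkcond /hpairs big_allpairs; apply: eq_big_seq => p pf.
  rewrite big_map [LHS]big_mkcond; apply: eq_big_seq => q qg.
  have -> // : phi (hdeg (p, q)) = phi p.1 + phi q.1.
  by rewrite /hdeg /=; apply: phiD; rewrite mem_cat ?(map_f fst pf) ?(map_f fst qg) ?orbT.
rewrite (sum_partition_key _ hdeg (fun j => phi j == c)).
by apply: (Rsubmod_sum (Rsubmod_ideal_gen RM _)) => j _; apply: Af_mul_hprod fR gR j.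
Qed.

Lemma Af_mul_wterms_prod f g : torsionfree_cancellative_monoid G ->
  inRX R f -> inRX R g -> exists phi N,
  forall l1 l2, size l1 = N -> size l2 = N ->
    {subset l1 <= wterms phi f} -> {subset l2 <= wterms phi g} ->
    Af R Rg (f * g) (coef_prod l1 * coef_prod l2).
Proof.
move=> /torsionfree_cancellative_pair tfG fR gR.
pose S := map fst (hterms f) ++ map fst (hterms g).
have [phi [phiD phi_inj]] := rat_weight tfG S.
have f_S : {subset map fst (hterms f) <= S} by move=> a a_f; rewrite mem_cat a_f.
have g_S : {subset map fst (hterms g) <= S} by move=> a a_g; rewrite mem_cat a_g orbT.
have mul_coef_mem c : Af R Rg (f * g) (1 * mul_coef (wterms phi f) (wterms phi g) c).
  by rewrite mul1r; apply: Af_mul_coef_wterms.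
have [N prodN] := mul_coef_power_mem R1 RB RM (Rsubmod_ideal_gen RM _)
  (wterms_uniq phi_inj f_S fR) (wterms_uniq phi_inj g_S gR)
  (R_wterms (phi := phi) fR) (R_wterms (phi := phi) gR) mul_coef_mem.
by exists phi, N => l1 l2 *; rewrite -[coef_prod l1]mul1r; apply: prodN.
Qed.
Section Semistar.
Variable star : (K -> Prop) -> (K -> Prop).
Hypothesis star_op : semistar R star.

Lemma star_eq_R E : nz_submod R E -> (forall z, E z -> R z) -> star E 1 -> star E = star R.
Proof.
have [star_nz _ star_mono star_ext star_idem] := star_op.
move=> nzE ER starE1; apply: functional_extensionality => z.
apply: propositional_extensionality; split; first exact: star_mono nz_submod_R ER z.
rewrite -(star_idem _ nzE); apply: star_mono nz_submod_R (star_nz _ nzE) _ z => r Rr.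
by have [_ _ starEM _] := star_nz _ nzE; rewrite -[r]mulr1; apply: starEM.
Qed.

(* Since [star (Af f) = star R] contains 1, [z * Af f <= star E] gives
   [z = z * 1 \in z * star (Af f) = star (z * Af f) <= star E]. *)
Lemma star_colon f E z : inRX R f -> f != 0 -> star (Af R Rg f) = star R ->
  nz_submod R E -> (forall p, p \in hterms f -> star E (z * p.2)) -> star E z.
Proof.
have [star_nz star_scale star_mono star_ext star_idem] := star_op.
move=> fR f_neq0 starAf nzE zf; have [starE0 starED starEM _] := star_nz _ nzE.
have [-> // | z_neq0] := eqVneq z 0.
have zAf w : Af R Rg f w -> star E (z * w).
  apply: (ideal_gen_min (T := fun w => star E (z * w))).
    split=> [|a b za zb|r a Rr za]; rewrite ?mulr0 ?mulrDr //; first exact: starED.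
    by rewrite mulrCA; apply: starEM.
  move=> y [i /(hcomp_hterms fR) [-> | [p pf ->]]]; [by rewrite mulr0 | exact: zf].
have nzAf := nz_submod_Af fR f_neq0.
have zAf_starE w : scale_set z (Af R Rg f) w -> star E w by case=> e /zAf ? ->.
have := star_mono _ _ (nz_submod_scale z_neq0 nzAf) (star_nz _ nzE) zAf_starE z.
rewrite star_scale // star_idem // starAf; apply; exists 1; last by rewrite mulr1.
exact: star_ext nz_submod_R _ R1.
Qed.

Lemma Nstar_1 : Nstar R Rg star 1.
Proof. by split; [exact: inRX_1 | exact: oner_neq0 | rewrite Af_1]. Qed.

Lemma Nstar_mul_factors f g : inRX R f -> inRX R g -> Nstar R Rg star (f * g) ->
  Nstar R Rg star f /\ Nstar R Rg star g.
Proof.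
have [star_nz _ star_mono star_ext _] := star_op.
move=> fR gR [fgR fg_neq0 starAfg].
have f_neq0 : f != 0 by apply: contraNneq fg_neq0 => ->; rewrite mul0r.
have g_neq0 : g != 0 by apply: contraNneq fg_neq0 => ->; rewrite mulr0.
have Nstar_above h : inRX R h -> h != 0 ->
    (forall z, Af R Rg (f * g) z -> Af R Rg h z) -> Nstar R Rg star h.
  move=> hR h_neq0 Afg_h; split=> //; apply: star_eq_R (nz_submod_Af hR h_neq0) (@Af_R _) _.
  apply: star_mono (nz_submod_Af fgR fg_neq0) (nz_submod_Af hR h_neq0) Afg_h _ _.
  by rewrite starAfg; apply: star_ext nz_submod_R _ R1.
have Afg_f z : Af R Rg (f * g) z -> Af R Rg f z by case/(Af_mul_sub fR gR).
have Afg_g z : Af R Rg (f * g) z -> Af R Rg g z by case/(Af_mul_sub fR gR).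
by split; [apply: Nstar_above fR f_neq0 Afg_f | apply: Nstar_above gR g_neq0 Afg_g].
Qed.

Hypothesis tfG : torsionfree_cancellative_monoid G.

Lemma Nstar_mul f g : Nstar R Rg star f -> Nstar R Rg star g -> Nstar R Rg star (f * g).
Proof.
have [star_nz _ _ star_ext _] := star_op.
move=> [fR f_neq0 starAf] [gR g_neq0 starAg].
have fg_neq0 := mulf_neq0 f_neq0 g_neq0; have fgR := inRX_mul fR gR.
have nzAfg := nz_submod_Af fgR fg_neq0.
split=> //; apply: (star_eq_R nzAfg (@Af_R _)).
have [phi [N prodN]] := Af_mul_wterms_prod tfG fR gR.
pose Q := star (Af R Rg (f * g)).
have colon h : inRX R h -> h != 0 -> star (Af R Rg h) = star R ->
    forall z, (forall p, p \in wterms phi h -> Q (z * p.2)) -> Q z.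
  move=> hR h_neq0 starAh z zh; apply: star_colon hR h_neq0 starAh nzAfg _ => p ph.
  exact: (zh _ (map_f (fun p => (phi p.1, p.2)) ph)).
apply: (coef_prod_colon (colon f fR f_neq0 starAf) (N := N)) => l1 size1 l1f.
rewrite mul1r; apply: (coef_prod_colon (colon g gR g_neq0 starAg) (N := N)) => l2 size2 l2g.
exact: star_ext nzAfg _ (prodN l1 l2 size1 size2 l1f l2g).
Qed.

End Semistar.

End GradedDomain.

Unset Implicit Arguments.

Theorem lemma2p2 (G : nmodType) (K : fieldType) (R : K -> Prop) (Rg : G -> K -> Prop)
    (star : (K -> Prop) -> (K -> Prop)) :
  torsionfree_cancellative_monoid G ->
  graded_domain R Rg ->
  semistar R star ->
  saturated_mult_closed R (Nstar R Rg star).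
Proof.
move=> tfG [[R1 RB RM] [Rg0 [RgB [Rg_R [RgM [R_hdec [hdec_direct _]]]]]]] star_op.
split=> [f [] // | | f g | f g fR gR].
- by apply: Nstar_1.
- by apply: Nstar_mul.
- by apply: Nstar_mul_factors.
Qed.
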